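(* Let $\mathcal{H}_S$ (system) and $\mathcal{H}_B$ (bath) be Hilbert spaces (with all traces below finite, e.g. finite-dimensional). Let $H_S(s)$, $s\in[0,t]$, be a (possibly time-dependent) self-adjoint system Hamiltonian, $H_B$ a time-independent self-adjoint bath Hamiltonian, and $U_t$ any unitary on $\mathcal{H}_S\otimes\mathcal{H}_B$. Fix $\beta_S,\beta_B>0$, put $\Delta\beta=\beta_B-\beta_S$, and set $Z_S(s)={\rm Tr}[e^{-\beta_S H_S(s)}]$, $\tau_S(s)=e^{-\beta_S H_S(s)}/Z_S(s)$, $Z_B={\rm Tr}[e^{-\beta_B H_B}]$, $\tau_B=e^{-\beta_B H_B}/Z_B$, $F_S(s)=-\beta_S^{-1}\ln Z_S(s)$, $\Delta F_S=F_S(t)-F_S(0)$. Let $\{|\epsilon\rangle\}$ be an orthonormal eigenbasis of $H_S(0)$ with eigenvalues $\epsilon$. Define $\Phi_t(\rho)={\rm Tr}_B[U_t(\rho\otimes\tau_B)U_t^\dagger]$, $\Delta\tilde E(\epsilon)={\rm Tr}[H_S(t)\Phi_t(|\epsilon\rangle\langle\epsilon|)]-\epsilon$, $\tilde Z_S(t)=\sum_\epsilon e^{-\beta_S{\rm Tr}[H_S(t)\Phi_t(|\epsilon\rangle\langle\epsilon|)]}$, $$\Theta_{SB}(t)=\sum_\epsilon \frac{e^{-\beta_S{\rm Tr}[H_S(t)\Phi_t(|\epsilon\rangle\langle\epsilon|)]}}{\tilde Z_S(t)}\,U_t(|\epsilon\rangle\langle\epsilon|\otimes\tau_B)U_t^\dagger,\qquad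 \tilde\rho_S(t)={\rm Tr}_B[\Theta_{SB}(t)],$$ $\langle\tilde Q\rangle_B={\rm Tr}[H_B\tau_B]-{\rm Tr}[(\mathbb{1}_S\otimes H_B)\Theta_{SB}(t)]$, and $\tilde W(\epsilon)=\Delta\tilde E(\epsilon)-\langle\tilde Q\rangle_B$. Writing $\langle f\rangle_{\tilde P}=\sum_\epsilon\frac{e^{-\beta_S\epsilon}}{Z_S(0)}f(\epsilon)$ and $\langle\tilde W\rangle=\langle\tilde W\rangle_{\tilde P}$, one has $$\langle e^{-\beta_S\tilde W}\rangle_{\tilde P}=e^{-\beta_S\Delta F_S}\,e^{-D[\Theta_{SB}(t)\|\tau_S(t)\otimes\tau_B]}\,e^{-\Delta\beta\,\langle\tilde Q\rangle_B},$$ and consequently $$\langle\tilde W\rangle\ \ge\ \Delta F_S+\beta_S^{-1}D[\tilde\rho_S(t)\|\tau_S(t)]+\frac{\Delta\beta}{\beta_S}\langle\tilde Q\rangle_B,$$ where $D[\rho\|\sigma]={\rm Tr}[\rho\ln\rho]-{\rm Tr}[\rho\ln\sigma]$ is the quantum relative entropy.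
   Context: Setting: system initially thermal at inverse temperature $\beta_S$, bath initially thermal at inverse temperature $\beta_B$; an initial energy measurement of the system yields $\epsilon$ with probability $e^{-\beta_S\epsilon}/Z_S(0)$, followed by joint evolution $U_t$ of $|\epsilon\rangle\langle\epsilon|\otimes\tau_B$. $\langle\tilde Q\rangle_B$ (guessed quantum heat) is a constant independent of $\epsilon$. *)

From mathcomp Require Import all_boot all_order all_algebra.
From mathcomp Require Import reals.
From mathcomp Require Import sequences exp.
From mathcomp Require Import complex.
From mathcomp Require mxtens.
Set Implicit Arguments. Unset Strict Implicit. Unset Printing Implicit Defensive.
Import Order.TTheory GRing.Theory Num.Theory.
Local Open Scope ring_scope.

Section QDefs.
Variable R : realType.
Local Notation C := R[i].

Definition RC (x : R) : C := (x%:C)%C.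

Definition adj m n (A : 'M[C]_(m, n)) : 'M[C]_(n, m) := (map_mx Num.conj A)^T.

Definition tens m n p q (A : 'M[C]_(m, n)) (B : 'M[C]_(p, q)) : 'M[C]_(m * p, n * q) :=
  mxtens.tensmx A B.

Definition ptrB n m (X : 'M[C]_(n * m)) : 'M[C]_n :=
  \matrix_(i, j) \sum_(k < m) X (mxtens.mxtens_index (i, k)) (mxtens.mxtens_index (j, k)).

(* functional calculus f(A) for a self-adjoint (normal) matrix A, through the
   library's spectral decomposition A = P^-1 diag(sp) P (spectral.v);
   for hermitian A the spectrum sp is real and f acts on it. *)
Definition mfun n (f : R -> R) (A : 'M[C]_n) : 'M[C]_n :=
  invmx (spectralmx A) *m diag_mx (map_mx (fun z => RC (f (complex.Re z))) (spectral_diag A))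
    *m spectralmx A.

Definition boltz n (beta : R) (H : 'M[C]_n) : 'M[C]_n := mfun (fun x => expR (- beta * x)) H.
Definition partZ n (beta : R) (H : 'M[C]_n) : R := complex.Re (\tr (boltz beta H)).
Definition gibbs n (beta : R) (H : 'M[C]_n) : 'M[C]_n := RC (partZ beta H)^-1 *: boltz beta H.
Definition freeF n (beta : R) (H : 'M[C]_n) : R := - beta^-1 * ln (partZ beta H).

Definition mln n (A : 'M[C]_n) : 'M[C]_n := mfun (@ln R) A.
Definition relent n (rho sigma : 'M[C]_n) : R :=
  complex.Re (\tr (rho *m mln rho)) - complex.Re (\tr (rho *m mln sigma)).

Definition Phi n m (U : 'M[C]_(n * m)) (tauB : 'M[C]_m) (rho : 'M[C]_n) : 'M[C]_n :=
  ptrB (U *m tens rho tauB *m adj U).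

(* |eps_i><eps_i| where |eps_i> is the i-th column of V *)
Definition proj n (V : 'M[C]_n) (i : 'I_n) : 'M[C]_n := col i V *m adj (col i V).

Section Setting.
Variables (n m : nat) (HS0 HSt : 'M[C]_n) (HB : 'M[C]_m) (U : 'M[C]_(n * m))
  (betaS betaB : R) (V : 'M[C]_n) (e : 'I_n -> R).

Definition tauB : 'M[C]_m := gibbs betaB HB.
Definition tauSt : 'M[C]_n := gibbs betaS HSt.
Definition DeltaF : R := freeF betaS HSt - freeF betaS HS0.
Definition Efin (i : 'I_n) : R := complex.Re (\tr (HSt *m Phi U tauB (proj V i))).
Definition DeltaE (i : 'I_n) : R := Efin i - e i.
Definition Ztil : R := \sum_(i < n) expR (- betaS * Efin i).
Definition Theta : 'M[C]_(n * m) :=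
  \sum_(i < n) RC (expR (- betaS * Efin i) / Ztil) *: (U *m tens (proj V i) tauB *m adj U).
Definition rhoTil : 'M[C]_n := ptrB Theta.
Definition Qtil : R := complex.Re (\tr (HB *m tauB)) - complex.Re (\tr (tens (1%:M : 'M[C]_n) HB *m Theta)).
Definition Wtil (i : 'I_n) : R := DeltaE i - Qtil.
Definition avgP (f : 'I_n -> R) : R :=
  \sum_(i < n) expR (- betaS * e i) / partZ betaS HS0 * f i.
End Setting.

End QDefs.

From mathcomp Require Import all_boot all_order all_algebra.
From mathcomp Require Import reals.
From mathcomp Require Import sequences exp.
From mathcomp Require Import complex.
From mathcomp Require mxtens.
From mathcomp Require Import ring lra.
Import Order.TTheory GRing.Theory Num.Theory.
Set Implicit Arguments. Unset Strict Implicit.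
Local Open Scope ring_scope.

(* [Theta = U (rho_q (x) tau_B) U^dag] with [rho_q = sum_eps q_eps |eps><eps|],
   [q_eps = exp (- betaS E(eps)) / Ztil_S(t)] and [E(eps) = Tr[H_S(t) Phi_t(|eps><eps|)]].
   The spectrum of [Theta] is the product of [q] and of the spectrum of [tau_B], and
   [ln tau = - beta H - ln Z] for a Gibbs state, so
   [D[Theta || tau_S(t) (x) tau_B] = ln Z_S(t) - ln Ztil_S(t) - betaB <Q>_B]: the
   energy term [Tr[Theta (H_S(t) (x) 1)] = sum_eps q_eps E(eps)] cancels against the
   entropy of [q].  Directly from the definitions,
   [<exp (- betaS W)> = Ztil_S(t) exp (betaS <Q>_B) / Z_S(0)], which is the equality.
   The inequality follows from Jensen's inequality for [exp] and from the monotonicity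
   [D[rho_S || sigma] <= D[rho || sigma (x) tau]] under the partial trace: the gap is
   [D[rho || rho_S (x) tau] >= 0] (Klein's inequality), which in the eigenbases of the
   two arguments is [ln x <= x - 1] averaged against the doubly stochastic matrix of
   squared moduli of the change of basis. *)

Section RealInequalities.
Variable R : realType.

Lemma ln_le_subr1 (x : R) : 0 < x -> ln x <= x - 1.
Proof. by move=> hx; have := expR_ge1Dx (ln x); rewrite lnK ?posrE //; lra. Qed.

Lemma sumr_gt0 (I : finType) (i0 : I) (F : I -> R) :
  (forall i, 0 < F i) -> 0 < \sum_i F i.
Proof.
move=> hF; rewrite (bigD1 i0) //=; apply: ltr_pwDl (hF i0) _.
by apply: sumr_ge0 => i _; exact: ltW.
Qed.

Lemma jensen_expR n (p w : 'I_n -> R) : (forall i, 0 <= p i) -> \sum_i p i = 1 ->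
  expR (\sum_i p i * w i) <= \sum_i p i * expR (w i).
Proof.
move=> p0 p1; set a := \sum_i p i * w i.
have tangent i : p i * (expR a * (1 + (w i - a))) <= p i * expR (w i).
  rewrite ler_wpM2l // -[X in _ <= expR X](subrK a) expRD mulrC.
  by rewrite ler_wpM2r ?expR_ge0 // expR_ge1Dx.
apply: le_trans (ler_sum _ (fun i _ => tangent i)).
under eq_bigr do rewrite mulrCA mulrDr mulr1 mulrBr.
by rewrite -mulr_sumr big_split sumrB /= -/a -mulr_suml p1 mul1r subrr addr0 mulr1.
Qed.

Lemma klein_stochastic N (r th s s' : 'I_N -> R) (T : 'I_N -> 'I_N -> R) :
  (forall a, 0 <= r a) -> (forall b a, 0 <= T b a) ->
  (forall a, \sum_b T b a = 1) -> (forall b, \sum_a T b a = 1) ->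
  (forall b, th b = \sum_a T b a * r a) -> (forall b, 0 <= s b) ->
  \sum_a r a = \sum_b s b ->
  (forall b, 0 < s b -> s' b = ln (s b)) -> (forall b, s b = 0 -> th b = 0) ->
  \sum_b s' b * th b <= \sum_a r a * ln (r a).
Proof.
move=> r0 T0 Tcol Trow thE s0 rs lns supp.
have termwise a b :
    T b a * (r a - s b) <= T b a * (r a * ln (r a)) - T b a * (r a * s' b).
  have [ra0|ra_neq0] := eqVneq (r a) 0.
    rewrite ra0 !mul0r !mulr0 subrr sub0r mulrN oppr_le0.
    exact: mulr_ge0.
  have ra_gt0 : 0 < r a by rewrite lt0r ra_neq0 r0.
  have [sb0|sb_neq0] := eqVneq (s b) 0.
    have /psumr_eq0P thb0 : \sum_a T b a * r a = 0 by rewrite -thE supp.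
    have /eqP := thb0 (fun a _ => mulr_ge0 (T0 b a) (r0 a)) a isT.
    rewrite mulf_eq0 (negbTE ra_neq0) orbF => /eqP ->.
    by rewrite !mul0r subrr.
  rewrite -mulrBr; apply: ler_wpM2l; first exact: T0.
  have sb_gt0 : 0 < s b by rewrite lt0r sb_neq0 s0.
  have := ln_le_subr1 (divr_gt0 sb_gt0 ra_gt0).
  rewrite ln_div ?posrE // => /(ler_wpM2l (ltW ra_gt0)).
  rewrite !mulrBr mulr1 mulrCA divff ?gt_eqF // mulr1 lns //.
  lra.
have -> : \sum_b s' b * th b = \sum_a \sum_b T b a * (r a * s' b).
  rewrite exchange_big /=; apply: eq_bigr => b _; rewrite thE mulr_sumr.
  by apply: eq_bigr => a _; ring.
have -> : \sum_a r a * ln (r a) = \sum_a \sum_b T b a * (r a * ln (r a)).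
  by apply: eq_bigr => a _; rewrite -mulr_suml Tcol mul1r.
have mass : \sum_a \sum_b T b a * (r a - s b) = 0.
  under eq_bigr do rewrite (eq_bigr _ (fun b _ => mulrBr _ _ _)) sumrB -mulr_suml Tcol mul1r.
  rewrite sumrB rs exchange_big /= -sumrB; apply: big1 => b _.
  by rewrite -mulr_suml Trow mul1r subrr.
rewrite -subr_ge0 -sumrB -[X in X <= _]mass; apply: ler_sum => a _.
by rewrite -sumrB; apply: ler_sum => b _; exact: termwise.
Qed.

Lemma ge_of_expR_bound (b b' a F D D' Q : R) : 0 < b ->
  expR (- b * a) <= expR (- b * F) * expR (- D) * expR (- (b' - b) * Q) -> D' <= D ->
  F + b^-1 * D' + (b' - b) / b * Q <= a.
Proof.
move=> hb; rewrite -!expRD ler_expR => hexp hD; rewrite -(ler_pM2l hb).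
have -> : b * (F + b^-1 * D' + (b' - b) / b * Q) = b * F + D' + (b' - b) * Q.
  by field; exact: lt0r_neq0.
lra.
Qed.

End RealInequalities.

Section ComplexScalars.
Variable R : realType.
Local Notation C := R[i].

Lemma conj_RC (x : R) : Num.conj (RC x) = RC x.
Proof. exact: conjc_real. Qed.

Lemma Re_RCM (x : R) (z : C) : complex.Re (RC x * z) = x * complex.Re z.
Proof. by case: z => a b /=; rewrite mul0r subr0. Qed.

Lemma RCD (x y : R) : RC (x + y) = RC x + RC y.
Proof. exact: rmorphD. Qed.

Lemma RCM (x y : R) : RC (x * y) = RC x * RC y.
Proof. exact: rmorphM. Qed.

Lemma RC1 : RC (1 : R) = 1.
Proof. exact: rmorph1. Qed.

Lemma RC_sum I (r : seq I) (P : pred I) (F : I -> R) :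
  RC (\sum_(i <- r | P i) F i) = \sum_(i <- r | P i) RC (F i).
Proof. exact: rmorph_sum. Qed.

Lemma ReD (x y : C) : complex.Re (x + y) = complex.Re x + complex.Re y.
Proof. by case: x; case: y. Qed.

Lemma Re_sum I (r : seq I) (P : pred I) (F : I -> C) :
  complex.Re (\sum_(i <- r | P i) F i) = \sum_(i <- r | P i) complex.Re (F i).
Proof. by elim/big_rec2: _ => // i y1 y2 _ <-; rewrite ReD. Qed.

Lemma Re_mul_conj_ge0 (z : C) : 0 <= complex.Re (z * Num.conj z).
Proof. by case: z => a b /=; rewrite mulrN opprK addr_ge0 // sqr_ge0. Qed.

End ComplexScalars.

Section AdjointTensor.
Variable R : realType.
Local Notation C := R[i].
Local Notation idx := mxtens.mxtens_index.

Lemma adjE m n (A : 'M[C]_(m, n)) : adj A = (A ^t*)%sesqui.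
Proof. by rewrite /adj map_trmx. Qed.

Lemma adjK m n (A : 'M[C]_(m, n)) : adj (adj A) = A.
Proof. by apply/matrixP => i j; rewrite !mxE conjCK. Qed.

Lemma adjM m n p (A : 'M[C]_(m, n)) (B : 'M[C]_(n, p)) :
  adj (A *m B) = adj B *m adj A.
Proof. by rewrite /adj map_mxM trmx_mul. Qed.

Lemma adj_tens m n p q (A : 'M[C]_(m, n)) (B : 'M[C]_(p, q)) :
  adj (tens A B) = tens (adj A) (adj B).
Proof. by rewrite /adj /tens mxtens.map_mxT mxtens.trmx_tens. Qed.

Lemma unitary_mulmxV n (U : 'M[C]_n) : U \is unitarymx -> U *m adj U = 1%:M.
Proof. by move=> /unitarymxP; rewrite adjE. Qed.

Lemma unitary_mulVmx n (U : 'M[C]_n) : U \is unitarymx -> adj U *m U = 1%:M.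
Proof. by move=> hU; rewrite adjE -invmx_unitary // mulVmx // unitarymx_unit. Qed.

Lemma adj_unitary n (U : 'M[C]_n) : U \is unitarymx -> adj U \is unitarymx.
Proof. by rewrite adjE trmxC_unitary. Qed.

Lemma tensM m n p q r s (A : 'M[C]_(m, n)) (B : 'M[C]_(p, q))
    (A' : 'M[C]_(n, r)) (B' : 'M[C]_(q, s)) :
  tens A B *m tens A' B' = tens (A *m A') (B *m B').
Proof. exact: mxtens.tensmx_mul. Qed.

Lemma tensE m n p q (A : 'M[C]_(m, n)) (B : 'M[C]_(p, q)) i j k l :
  tens A B (idx (i, j)) (idx (k, l)) = A i k * B j l.
Proof. exact: mxtens.tensmxE. Qed.

Lemma mxtens_index_eq n m (a b : 'I_n * 'I_m) : (idx a == idx b) = (a == b).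
Proof. exact: (can_eq (@mxtens.mxtens_indexK n m)). Qed.

Lemma tens1 n m : tens (1%:M : 'M[C]_n) (1%:M : 'M[C]_m) = 1%:M.
Proof.
apply/matrixP => a b.
case: (mxtens.mxtens_indexP a) => i j; case: (mxtens.mxtens_indexP b) => k l.
rewrite tensE !mxE mxtens_index_eq xpair_eqE.
by case: (i == k); case: (j == l); rewrite /= ?mulr1 ?mulr0 ?mul0r.
Qed.

Lemma tens_unitary n m (P : 'M[C]_n) (Q : 'M[C]_m) :
  P \is unitarymx -> Q \is unitarymx -> tens P Q \is unitarymx.
Proof.
move=> hP hQ; apply/unitarymxP.
by rewrite -adjE adj_tens tensM !unitary_mulmxV // tens1.
Qed.

Lemma big_mxtens_index (V : nmodType) n m (F : 'I_(n * m) -> V) :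
  \sum_(a < n * m) F a = \sum_(i < n) \sum_(j < m) F (idx (i, j)).
Proof.
rewrite pair_big /= (reindex (@mxtens.mxtens_index n m)) /=; last first.
  by apply: onW_bij; exists (@mxtens.mxtens_unindex n m);
    [exact: mxtens.mxtens_indexK | exact: mxtens.mxtens_unindexK].
by apply: eq_bigr => -[i j].
Qed.

Lemma tens_suml n m I (r : seq I) (c : I -> R) (A : I -> 'M[C]_n) (B : 'M[C]_m) :
  tens (\sum_(i <- r) RC (c i) *: A i) B = \sum_(i <- r) RC (c i) *: tens (A i) B.
Proof.
apply/matrixP => a b; rewrite !mxE summxE mulr_suml summxE.
by apply: eq_bigr => i _; rewrite !mxE mulrA.
Qed.

End AdjointTensor.

Section PartialTrace.
Variable R : realType.
Local Notation C := R[i].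
Local Notation idx := mxtens.mxtens_index.

Lemma mxtrace_delta_mul n (A : 'M[C]_n) i j : \tr (delta_mx j i *m A) = A i j.
Proof.
rewrite /mxtrace (bigD1 j) //= big1 ?addr0.
  rewrite !mxE (bigD1 i) //= big1 ?addr0 ?mxE ?eqxx ?mul1r //.
  by move=> k hk; rewrite !mxE eqxx (negbTE hk) mul0r.
by move=> k hk; rewrite !mxE big1 // => l _; rewrite !mxE (negbTE hk) mul0r.
Qed.

Lemma eq_mx_mxtrace n (A B : 'M[C]_n) :
  (forall Y, \tr (Y *m A) = \tr (Y *m B)) -> A = B.
Proof. by move=> h; apply/matrixP => i j; rewrite -!mxtrace_delta_mul h. Qed.

Lemma mxtrace_mul_ptrB n m (Y : 'M[C]_n) (X : 'M[C]_(n * m)) :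
  \tr (Y *m ptrB X) = \tr (tens Y 1%:M *m X).
Proof.
rewrite /mxtrace big_mxtens_index; apply: eq_bigr => i _.
rewrite mxE.
transitivity (\sum_(j < n) \sum_(k < m) Y i j * X (idx (j, k)) (idx (i, k))).
  by apply: eq_bigr => j _; rewrite mxE mulr_sumr.
rewrite exchange_big /=; apply: eq_bigr => k _.
rewrite mxE big_mxtens_index; apply: eq_bigr => j _.
rewrite (bigD1 k) //= big1 ?addr0; first by rewrite tensE mxE eqxx mulr1.
by move=> l hl; rewrite tensE mxE eq_sym (negbTE hl) mulr0 mul0r.
Qed.

Lemma mxtrace_sum n I (r : seq I) (F : I -> 'M[C]_n) :
  \tr (\sum_(i <- r) F i) = \sum_(i <- r) \tr (F i).
Proof. by rewrite /mxtrace; under eq_bigr do rewrite summxE; exact: exchange_big. Qed.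

Lemma mxtrace_ptrB_mul n m (X : 'M[C]_(n * m)) (Y : 'M[C]_n) :
  \tr (ptrB X *m Y) = \tr (X *m tens Y 1%:M).
Proof. by rewrite mxtrace_mulC mxtrace_mul_ptrB mxtrace_mulC. Qed.

Lemma mxtrace_ptrB n m (X : 'M[C]_(n * m)) : \tr (ptrB X) = \tr X.
Proof. by rewrite -[ptrB X]mul1mx mxtrace_mul_ptrB tens1 mul1mx. Qed.

Lemma ptrB_adj n m (X : 'M[C]_(n * m)) : adj (ptrB X) = ptrB (adj X).
Proof.
apply/matrixP => i j; rewrite !mxE rmorph_sum.
by apply: eq_bigr => k _; rewrite !mxE.
Qed.

Lemma ptrB_tens_conj n m (A : 'M[C]_n) (B : 'M[C]_m) (X : 'M[C]_(n * m)) :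
  B \is unitarymx ->
  ptrB (tens A B *m X *m tens (adj A) (adj B)) = A *m ptrB X *m adj A.
Proof.
move=> hB; apply: eq_mx_mxtrace => Y.
rewrite mxtrace_mul_ptrB !mulmxA mxtrace_mulC !mulmxA !tensM mulmx1.
by rewrite (unitary_mulVmx hB) -mxtrace_mul_ptrB -!mulmxA mxtrace_mulC !mulmxA.
Qed.

End PartialTrace.

Section Diagonalization.
Variable R : realType.
Local Notation C := R[i].
Local Notation uix := mxtens.mxtens_unindex.

Definition dg n (h : 'I_n -> R) : 'M[C]_n := diag_mx (\row_k RC (h k)).

Definition diagonalizes n (P : 'M[C]_n) (h : 'I_n -> R) (A : 'M[C]_n) :=
  P \is unitarymx /\ A = adj P *m dg h *m P.

Lemma dgE n (h : 'I_n -> R) i j : dg h i j = RC (h i) *+ (i == j).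
Proof. by rewrite !mxE. Qed.

Lemma eq_dg n (g h : 'I_n -> R) : (forall k, g k = h k) -> dg g = dg h.
Proof. by move=> e; apply/matrixP => i j; rewrite !dgE e. Qed.

Lemma dg1 n : dg (fun _ : 'I_n => 1) = 1%:M.
Proof. by apply/matrixP => i j; rewrite dgE RC1 mxE. Qed.

Lemma dgD n (g h : 'I_n -> R) : dg (fun k => g k + h k) = dg g + dg h.
Proof. by apply/matrixP => i j; rewrite !mxE RCD mulrnDl. Qed.

Lemma dgZ n (c : R) (h : 'I_n -> R) : dg (fun k => c * h k) = RC c *: dg h.
Proof. by apply/matrixP => i j; rewrite !mxE RCM mulrnAr. Qed.

Lemma adj_dg n (h : 'I_n -> R) : adj (dg h) = dg h.
Proof.
apply/matrixP => i j; rewrite !mxE.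
by have [->|_] := eqVneq i j; rewrite ?mulr1n ?conj_RC // !mulr0n rmorph0.
Qed.

Lemma tens_dg n m (g : 'I_n -> R) (h : 'I_m -> R) :
  tens (dg g) (dg h) = dg (fun a => g (uix a).1 * h (uix a).2).
Proof.
apply/matrixP => a b.
case: (mxtens.mxtens_indexP a) => i j; case: (mxtens.mxtens_indexP b) => k l.
rewrite tensE !dgE mxtens_index_eq xpair_eqE mxtens.mxtens_indexK /= RCM.
by case: (i == k); case: (j == l); rewrite /= ?mulr1n ?mulr0n ?mulr0 ?mul0r.
Qed.

Lemma diag_mx_comm_map n (W : 'M[C]_n) (s d : 'rV[C]_n) (g : C -> C) :
  diag_mx s *m W = W *m diag_mx d ->
  diag_mx (map_mx g s) *m W = W *m diag_mx (map_mx g d).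
Proof.
move=> /matrixP sWd; apply/matrixP => i j; move: (sWd i j).
rewrite !mul_diag_mx !mul_mx_diag !mxE => hij.
have [->|nz] := eqVneq (W i j) 0; first by rewrite mulr0 mul0r.
have -> : s 0 i = d 0 j by apply: (mulIf nz); rewrite hij mulrC.
by rewrite mulrC.
Qed.

(* [mfun] is defined through the library's spectral decomposition; any other
   unitary diagonalization computes the same matrix, because two diagonalizing
   bases only mix eigenvectors with equal eigenvalues. *)
Lemma mfun_unitary_diag n f (Q A : 'M[C]_n) (d : 'rV[C]_n) : Q \is unitarymx ->
  A = adj Q *m diag_mx d *m Q ->
  mfun f A = adj Q *m diag_mx (map_mx (fun z => RC (f (complex.Re z))) d) *m Q.
Proof.
move=> hQ hA.
have /orthomx_spectralP : A \is normalmx.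
  apply/orthomx_spectral_subproof; exists (Q, d); first exact: hQ.
  rewrite /= (invmx_unitary hQ) hA adjE; reflexivity.
have hP := spectral_unitarymx A.
rewrite /mfun !(invmx_unitary hP) -adjE.
move: hP; set P := spectralmx A; set s := spectral_diag A => hP sP.
have PQ : adj P *m diag_mx s *m P = adj Q *m diag_mx d *m Q by rewrite -sP.
clearbody P s; set W := P *m adj Q.
have sWd : diag_mx s *m W = W *m diag_mx d.
  have <- : P *m (adj P *m diag_mx s *m P) *m adj Q = diag_mx s *m W.
    by rewrite !mulmxA (unitary_mulmxV hP) mul1mx -mulmxA.
  rewrite PQ /W !mulmxA -[_ *m Q *m adj Q]mulmxA.
  by rewrite (unitary_mulmxV hQ) mulmx1.
have PWQ : P = W *m Q by rewrite /W -mulmxA (unitary_mulVmx hQ) mulmx1.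
rewrite {2}PWQ mulmxA -(mulmxA (adj P)) (diag_mx_comm_map _ sWd) mulmxA.
rewrite /W mulmxA (unitary_mulVmx hP) mul1mx; reflexivity.
Qed.

Lemma diagonalizes_mfun n f (P A : 'M[C]_n) h : diagonalizes P h A ->
  diagonalizes P (fun k => f (h k)) (mfun f A).
Proof.
move=> [hP hA]; split; first exact: hP.
rewrite (mfun_unitary_diag f hP hA); congr (_ *m diag_mx _ *m _).
by apply/rowP => k; rewrite !mxE.
Qed.

Lemma hermitian_diagonalizable n (A : 'M[C]_n) :
  A \is hermsymmx -> exists P h, diagonalizes P h A.
Proof.
move=> hA; have /orthomx_spectralP eA := hermitian_normalmx hA.
have /mxOverP hr := hermitian_spectral_diag_real hA.
exists (spectralmx A), (fun k => complex.Re (spectral_diag A 0 k)).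
split; first exact: spectral_unitarymx.
rewrite {1}eA (invmx_unitary (spectral_unitarymx A)) -adjE.
congr (_ *m diag_mx _ *m _); apply/rowP => k; rewrite !mxE.
by rewrite /RC (RRe_real (hr 0 k)).
Qed.

Lemma diagonalizes1 n (P : 'M[C]_n) :
  P \is unitarymx -> diagonalizes P (fun _ => 1) 1%:M.
Proof. by move=> hP; split; [exact: hP | rewrite dg1 mulmx1 unitary_mulVmx]. Qed.

Lemma diagonalizesZ n (P A : 'M[C]_n) h (c : R) : diagonalizes P h A ->
  diagonalizes P (fun k => c * h k) (RC c *: A).
Proof. by move=> [hP ->]; split; [exact: hP | rewrite dgZ -scalemxAr -scalemxAl]. Qed.

Lemma diagonalizesD n (P A B : 'M[C]_n) g h :
  diagonalizes P g A -> diagonalizes P h B ->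
  diagonalizes P (fun k => g k + h k) (A + B).
Proof. by move=> [hP ->] [_ ->]; split; [exact: hP | rewrite dgD mulmxDr mulmxDl]. Qed.

Lemma diagonalizes_tens n m (P A : 'M[C]_n) (Q B : 'M[C]_m) g h :
  diagonalizes P g A -> diagonalizes Q h B ->
  diagonalizes (tens P Q) (fun a => g (uix a).1 * h (uix a).2) (tens A B).
Proof.
move=> [hP ->] [hQ ->]; split; first exact: tens_unitary.
by rewrite adj_tens -!tensM tens_dg.
Qed.

Lemma diagonalizes_conj n (W X A : 'M[C]_n) r : diagonalizes W r A ->
  X \is unitarymx -> diagonalizes (W *m adj X) r (X *m A *m adj X).
Proof.
move=> [hW ->] hX; split; first exact: mul_unitarymx hW (adj_unitary hX).
by rewrite adjM adjK !mulmxA.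
Qed.

Lemma diagonalizes_adj n (P A : 'M[C]_n) h : diagonalizes P h A -> adj A = A.
Proof. by move=> [_ ->]; rewrite !adjM adjK adj_dg mulmxA. Qed.

Lemma hermsymmx_adj n (A : 'M[C]_n) : adj A = A -> A \is hermsymmx.
Proof. by move=> h; apply/is_hermitianmxP; rewrite expr0 scale1r -adjE h. Qed.

Lemma mxtrace_dg n (h : 'I_n -> R) : \tr (dg h) = RC (\sum_k h k).
Proof. by rewrite mxtrace_diag RC_sum; apply: eq_bigr => k _; rewrite mxE. Qed.

Lemma Re_tr_diagonalized n (P A : 'M[C]_n) h : diagonalizes P h A ->
  complex.Re (\tr A) = \sum_k h k.
Proof.
by move=> [hP ->]; rewrite mxtrace_mulC mulmxA (unitary_mulmxV hP) mul1mx mxtrace_dg.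
Qed.

Lemma diagonal_entry n (P A : 'M[C]_n) h : diagonalizes P h A ->
  forall k, complex.Re ((P *m A *m adj P) k k) = h k.
Proof.
move=> [hP ->] k; rewrite !mulmxA (unitary_mulmxV hP) mul1mx.
by rewrite -mulmxA (unitary_mulmxV hP) mulmx1 dgE eqxx mulr1n.
Qed.

Lemma sum_diag_conj n (X A : 'M[C]_n) : X \is unitarymx ->
  \sum_b complex.Re ((X *m A *m adj X) b b) = complex.Re (\tr A).
Proof.
move=> hX; rewrite -Re_sum -[\sum_b _]/(\tr (X *m A *m adj X)).
by rewrite mxtrace_mulC mulmxA (unitary_mulVmx hX) mul1mx.
Qed.

Lemma Re_tr_mul_diagonalized n (P A : 'M[C]_n) h : diagonalizes P h A ->
  forall Z, complex.Re (\tr (Z *m A)) = \sum_k h k * complex.Re ((P *m Z *m adj P) k k).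
Proof.
move=> [hP ->] Z.
have -> : \tr (Z *m (adj P *m dg h *m P)) = \tr ((P *m Z *m adj P) *m dg h).
  by rewrite !mulmxA mxtrace_mulC !mulmxA.
rewrite /mxtrace Re_sum; apply: eq_bigr => k _.
by rewrite mul_mx_diag !mxE mulrC Re_RCM.
Qed.

Lemma proj_sum n (V : 'M[C]_n) (q : 'I_n -> R) :
  \sum_i RC (q i) *: proj V i = V *m dg q *m adj V.
Proof.
apply/matrixP => a b; rewrite mul_mx_diag summxE [RHS]mxE; apply: eq_bigr => i _.
by rewrite !mxE big_ord1 !mxE; ring.
Qed.

End Diagonalization.

Section GibbsWeights.
Variable R : realType.
Local Notation C := R[i].
Local Notation uix := mxtens.mxtens_unindex.

Definition gweight n (beta : R) (h : 'I_n -> R) (k : 'I_n) : R :=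
  expR (- beta * h k) / \sum_j expR (- beta * h j).

Lemma gweight_gt0 n (beta : R) (h : 'I_n -> R) k : 0 < gweight beta h k.
Proof. by rewrite divr_gt0 ?expR_gt0 // (sumr_gt0 k) // => j; exact: expR_gt0. Qed.

Lemma sum_gweight n (beta : R) (h : 'I_n -> R) :
  (0 < n)%N -> \sum_k gweight beta h k = 1.
Proof.
move=> hn; rewrite -mulr_suml divff // gt_eqF // (sumr_gt0 (Ordinal hn)) // => j.
exact: expR_gt0.
Qed.

Lemma ln_gweight n (beta : R) (h : 'I_n -> R) k :
  ln (gweight beta h k) = - beta * h k - ln (\sum_j expR (- beta * h j)).
Proof.
rewrite ln_div ?expRK // posrE ?expR_gt0 // (sumr_gt0 k) // => j.
exact: expR_gt0.
Qed.

Lemma sum_gweight_ln n (beta : R) (h : 'I_n -> R) : (0 < n)%N ->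
  \sum_k gweight beta h k * ln (gweight beta h k) =
  - beta * \sum_k gweight beta h k * h k - ln (\sum_j expR (- beta * h j)).
Proof.
move=> hn; under eq_bigr do rewrite ln_gweight mulrBr mulrCA.
by rewrite sumrB -mulr_sumr -mulr_suml sum_gweight // mul1r.
Qed.

Lemma sum_tens_xlnx n m (p : 'I_n -> R) (t : 'I_m -> R) :
  (forall i, 0 < p i) -> (forall l, 0 < t l) -> \sum_i p i = 1 -> \sum_l t l = 1 ->
  \sum_(a < n * m) (p (uix a).1 * t (uix a).2) * ln (p (uix a).1 * t (uix a).2)
  = \sum_i p i * ln (p i) + \sum_l t l * ln (t l).
Proof.
move=> hp ht sp st; rewrite big_mxtens_index.
under eq_bigr => i _ do under eq_bigr => l _ do
  rewrite mxtens.mxtens_indexK /= lnM ?posrE // mulrDr.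
under eq_bigr do rewrite big_split /=.
rewrite big_split /=; congr (_ + _).
  apply: eq_bigr => i _; under eq_bigr do rewrite mulrAC.
  by rewrite -mulr_sumr st mulr1.
rewrite exchange_big /=; apply: eq_bigr => l _; under eq_bigr do rewrite -mulrA.
by rewrite -mulr_suml sp mul1r.
Qed.

Lemma partZ_diagonalized n (P H : 'M[C]_n) h (beta : R) : diagonalizes P h H ->
  partZ beta H = \sum_k expR (- beta * h k).
Proof. by move=> dH; rewrite /partZ (Re_tr_diagonalized (diagonalizes_mfun _ dH)). Qed.

Lemma gibbs_diagonalized n (P H : 'M[C]_n) h (beta : R) : diagonalizes P h H ->
  diagonalizes P (gweight beta h) (gibbs beta H).
Proof.
move=> dH; have [hP e] := diagonalizesZ (partZ beta H)^-1 (diagonalizes_mfun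
  (fun x => expR (- beta * x)) dH).
split; first exact: hP.
rewrite /gibbs /boltz e; congr (_ *m _ *m _); apply: eq_dg => k.
by rewrite (partZ_diagonalized _ dH) mulrC.
Qed.

Lemma Re_tr_mul_ln_gibbs_tens n m (rho : 'M[C]_(n * m)) (HS : 'M[C]_n) (HB : 'M[C]_m)
    P hS Pb hB (bS bB : R) :
  diagonalizes P hS HS -> diagonalizes Pb hB HB -> complex.Re (\tr rho) = 1 ->
  complex.Re (\tr (rho *m mln (tens (gibbs bS HS) (gibbs bB HB)))) =
  - bS * complex.Re (\tr (rho *m tens HS 1%:M)) - ln (\sum_k expR (- bS * hS k))
  - bB * complex.Re (\tr (rho *m tens 1%:M HB)) - ln (\sum_l expR (- bB * hB l)).
Proof.
move=> dS dB; have [hP _] := dS; have [hPb _] := dB.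
rewrite -(sum_diag_conj rho (tens_unitary hP hPb)) => tr1.
rewrite (Re_tr_mul_diagonalized (diagonalizes_mfun (@ln R)
  (diagonalizes_tens (gibbs_diagonalized bS dS) (gibbs_diagonalized bB dB)))).
rewrite (Re_tr_mul_diagonalized (diagonalizes_tens dS (diagonalizes1 hPb))).
rewrite (Re_tr_mul_diagonalized (diagonalizes_tens (diagonalizes1 hP) dB)).
set X := tens P Pb *m rho *m adj (tens P Pb) in tr1 *.
transitivity (- bS * \sum_a (hS (uix a).1 * 1) * complex.Re (X a a)
    + - bB * \sum_a (1 * hB (uix a).2) * complex.Re (X a a)
    - (ln (\sum_k expR (- bS * hS k)) + ln (\sum_l expR (- bB * hB l)))
      * \sum_a complex.Re (X a a)).
  rewrite !mulr_sumr -big_split -sumrB; apply: eq_bigr => a _ /=.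
  by rewrite lnM ?posrE ?gweight_gt0 // !ln_gweight; ring.
by rewrite tr1; ring.
Qed.

End GibbsWeights.

Section RelativeEntropyMonotonicity.
Variable R : realType.
Local Notation C := R[i].
Local Notation idx := mxtens.mxtens_index.
Local Notation uix := mxtens.mxtens_unindex.

Lemma unitary_row_normsq n (M : 'M[C]_n) b : M \is unitarymx ->
  \sum_a complex.Re (M b a * Num.conj (M b a)) = 1.
Proof.
move=> hM; transitivity (complex.Re ((M *m adj M) b b)).
  by rewrite mxE Re_sum; apply: eq_bigr => a _; rewrite !mxE.
by rewrite (unitary_mulmxV hM) mxE eqxx.
Qed.

Lemma unitary_col_normsq n (M : 'M[C]_n) a : M \is unitarymx ->
  \sum_b complex.Re (M b a * Num.conj (M b a)) = 1.
Proof.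
move=> hM; transitivity (complex.Re ((adj M *m M) a a)).
  by rewrite mxE Re_sum; apply: eq_bigr => b _; rewrite !mxE mulrC.
by rewrite (unitary_mulVmx hM) mxE eqxx.
Qed.

Lemma diag_conj_normsq n (W X A : 'M[C]_n) r : diagonalizes W r A -> forall b,
  complex.Re ((X *m A *m adj X) b b) =
  \sum_a complex.Re ((X *m adj W) b a * Num.conj ((X *m adj W) b a)) * r a.
Proof.
move=> [_ ->] b.
have -> : X *m (adj W *m dg r *m W) *m adj X =
    (X *m adj W) *m dg r *m adj (X *m adj W) by rewrite adjM adjK !mulmxA.
move: (X *m adj W) => M; rewrite mxE Re_sum; apply: eq_bigr => a _.
rewrite mul_mx_diag !mxE [RHS]mulrC -Re_RCM; congr complex.Re; ring.
Qed.

Lemma diag_conj_ge0 n (W X A : 'M[C]_n) r : diagonalizes W r A ->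
  (forall a, 0 <= r a) -> forall b, 0 <= complex.Re ((X *m A *m adj X) b b).
Proof.
move=> dA r0 b; rewrite (diag_conj_normsq X dA).
by apply: sumr_ge0 => a _; rewrite mulr_ge0 ?Re_mul_conj_ge0.
Qed.

(* Klein's inequality, with [adj X *m dg s' *m X] standing for [ln sigma]: [s'] need
   only agree with [ln s] where [s > 0], since [rho] has no weight elsewhere.  This
   lets [relent_ptrB_le] use [ln x + ln y] for [ln (x y)] even where [x = 0]. *)
Lemma klein_inequality n (rho W X : 'M[C]_n) (r s s' : 'I_n -> R) :
  diagonalizes W r rho -> X \is unitarymx ->
  (forall a, 0 <= r a) -> (forall b, 0 <= s b) -> \sum_a r a = \sum_b s b ->
  (forall b, 0 < s b -> s' b = ln (s b)) ->
  (forall b, s b = 0 -> complex.Re ((X *m rho *m adj X) b b) = 0) ->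
  complex.Re (\tr (rho *m (adj X *m dg s' *m X))) <= complex.Re (\tr (rho *m mln rho)).
Proof.
move=> dW hX r0 s0 rs lns supp.
have hM : X *m adj W \is unitarymx := mul_unitarymx hX (adj_unitary dW.1).
have dX : diagonalizes X s' (adj X *m dg s' *m X) by split.
rewrite (Re_tr_mul_diagonalized dX) (Re_tr_mul_diagonalized (diagonalizes_mfun _ dW)).
under [X in _ <= X]eq_bigr do rewrite (diagonal_entry dW) mulrC.
apply: (klein_stochastic r0 _ _ _ (diag_conj_normsq X dW) s0 rs lns supp).
- by move=> b a; exact: Re_mul_conj_ge0.
- by move=> a; exact: unitary_col_normsq.
- by move=> b; exact: unitary_row_normsq.
Qed.

Lemma diagonalizes_tensD n m (P A : 'M[C]_n) (Q B : 'M[C]_m) g h :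
  diagonalizes P g A -> diagonalizes Q h B ->
  diagonalizes (tens P Q) (fun a => g (uix a).1 + h (uix a).2)
    (tens A 1%:M + tens 1%:M B).
Proof.
move=> dA dB; have [hP _] := dA; have [hQ _] := dB.
have [hPQ ->] := diagonalizesD (diagonalizes_tens dA (diagonalizes1 hQ))
  (diagonalizes_tens (diagonalizes1 hP) dB).
split; first exact: hPQ.
by congr (_ *m _ *m _); apply: eq_dg => a; rewrite mulr1 mul1r.
Qed.

Lemma mln_tens n m (sigma : 'M[C]_n) (tau : 'M[C]_m) P s Q t :
  diagonalizes P s sigma -> (forall k, 0 < s k) ->
  diagonalizes Q t tau -> (forall l, 0 < t l) ->
  mln (tens sigma tau) = tens (mln sigma) 1%:M + tens 1%:M (mln tau).
Proof.
move=> dP s0 dQ t0; rewrite /mln.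
have [_ ->] := diagonalizes_mfun (@ln R) (diagonalizes_tens dP dQ).
have [_ ->] := diagonalizes_tensD (diagonalizes_mfun (@ln R) dP)
  (diagonalizes_mfun (@ln R) dQ).
by congr (_ *m _ *m _); apply: eq_dg => a; rewrite lnM ?posrE.
Qed.

Lemma ptrB_marginal n m (rho : 'M[C]_(n * m)) (E : 'M[C]_n) lam (Q : 'M[C]_m) :
  diagonalizes E lam (ptrB rho) -> Q \is unitarymx -> forall k,
  \sum_l complex.Re ((tens E Q *m rho *m adj (tens E Q)) (idx (k, l)) (idx (k, l)))
  = lam k.
Proof.
move=> dE hQ k; rewrite -(diagonal_entry dE k) -(ptrB_tens_conj E rho hQ).
by rewrite -adj_tens mxE Re_sum.
Qed.

Lemma relent_ptrB_le n m (rho : 'M[C]_(n * m)) (sigma : 'M[C]_n) (tau : 'M[C]_m)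
    W r P s Q t :
  diagonalizes W r rho -> (forall a, 0 <= r a) ->
  diagonalizes P s sigma -> (forall k, 0 < s k) ->
  diagonalizes Q t tau -> (forall l, 0 < t l) -> \sum_l t l = 1 ->
  relent (ptrB rho) sigma <= relent rho (tens sigma tau).
Proof.
move=> dW r0 dP s0 dQ t0 t1.
have /hermitian_diagonalizable [E [lam dE]] : ptrB rho \is hermsymmx.
  by apply: hermsymmx_adj; rewrite ptrB_adj (diagonalizes_adj dW).
have hQ : Q \is unitarymx by case: dQ.
have hX : tens E Q \is unitarymx by apply: tens_unitary; first by case: dE.
have th0 := diag_conj_ge0 (tens E Q) dW r0.
have marg := ptrB_marginal dE hQ.
have lam0 k : 0 <= lam k by rewrite -marg; apply: sumr_ge0 => l _.
have klein : complex.Re (\tr (ptrB rho *m mln (ptrB rho)))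
    + complex.Re (\tr (rho *m tens 1%:M (mln tau))) <= complex.Re (\tr (rho *m mln rho)).
  rewrite mxtrace_ptrB_mul -ReD -mxtraceD -mulmxDr /mln.
  have [_ ->] := diagonalizes_tensD (diagonalizes_mfun (@ln R) dE)
    (diagonalizes_mfun (@ln R) dQ).
  apply: (klein_inequality (s := fun b => lam (uix b).1 * t (uix b).2) dW hX r0).
  - by move=> b; rewrite mulr_ge0 // ltW.
  - rewrite -mxtens.mulr_sum t1 mulr1 -(Re_tr_diagonalized dE) mxtrace_ptrB.
    by rewrite (Re_tr_diagonalized dW).
  - move=> b; rewrite pmulr_lgt0 // => lam_gt0.
    by rewrite lnM ?posrE.
  - move=> b /eqP; rewrite mulf_eq0 (gt_eqF (t0 _)) orbF => /eqP lam_b0.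
    have /psumr_eq0P := etrans (marg (uix b).1) lam_b0.
    move=> /(_ (fun l _ => th0 _) (uix b).2 isT).
    by rewrite -surjective_pairing mxtens.mxtens_unindexK.
have split_ln : complex.Re (\tr (rho *m mln (tens sigma tau))) =
    complex.Re (\tr (ptrB rho *m mln sigma)) + complex.Re (\tr (rho *m tens 1%:M (mln tau))).
  by rewrite (mln_tens dP s0 dQ t0) mulmxDr mxtraceD ReD mxtrace_ptrB_mul.
by rewrite /relent [X in _ <= _ - X]split_ln lerBrDr addrA subrK.
Qed.

End RelativeEntropyMonotonicity.

Section Setting.
Variable R : realType.
Local Notation C := R[i].
Local Notation uix := mxtens.mxtens_unindex.

Variables (n m : nat) (HS0 HSt : 'M[C]_n) (HB : 'M[C]_m) (U : 'M[C]_(n * m))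
  (betaS betaB : R) (V : 'M[C]_n) (e : 'I_n -> R)
  (P : 'M[C]_n) (hS : 'I_n -> R) (Pb : 'M[C]_m) (hB : 'I_m -> R).
Hypotheses (hn : (0 < n)%N) (hm : (0 < m)%N)
  (hU : U \is unitarymx) (hV : V \is unitarymx)
  (hev : forall i, HS0 *m col i V = RC (e i) *: col i V)
  (dS : diagonalizes P hS HSt) (dB : diagonalizes Pb hB HB).

Local Notation Th := (Theta HSt HB U betaS betaB V).
Local Notation Ef := (Efin HSt HB U betaB V).
Local Notation Q := (Qtil HSt HB U betaS betaB V).
Local Notation tS := (tauSt HSt betaS).
Local Notation tB := (tauB HB betaB).
Local Notation ZS := (\sum_k expR (- betaS * hS k)).
Local Notation ZB := (\sum_l expR (- betaB * hB l)).
Local Notation Zl := (\sum_i expR (- betaS * Ef i)).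

Let q := gweight betaS Ef.
Let qB := gweight betaB hB.

Lemma HS0_diagonalized : diagonalizes (adj V) e HS0.
Proof.
split; first exact: adj_unitary.
have HV : HS0 *m V = V *m dg e.
  apply/matrixP => a j; have /matrixP /(_ a 0) := hev j.
  rewrite mul_mx_diag !mxE [RHS]mulrC => <-.
  by apply: eq_bigr => k _; rewrite !mxE.
by rewrite adjK -HV -mulmxA (unitary_mulmxV hV) mulmx1.
Qed.

Lemma Theta_mixture : Th = U *m tens (V *m dg q *m adj V) tB *m adj U.
Proof.
rewrite -proj_sum tens_suml mulmx_sumr mulmx_suml; apply: eq_bigr => i _.
by rewrite -scalemxAr -scalemxAl.
Qed.

Lemma Re_tr_Theta_HS : complex.Re (\tr (Th *m tens HSt 1%:M)) = \sum_i q i * Ef i.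
Proof.
rewrite mxtrace_mulC /Theta mulmx_sumr mxtrace_sum Re_sum; apply: eq_bigr => i _.
by rewrite -scalemxAr mxtraceZ Re_RCM -mxtrace_mul_ptrB.
Qed.

Lemma Theta_diagonalized :
  diagonalizes (tens (adj V) Pb *m adj U) (fun a => q (uix a).1 * qB (uix a).2) Th.
Proof.
rewrite Theta_mixture; apply: diagonalizes_conj hU.
apply: diagonalizes_tens (gibbs_diagonalized betaB dB).
by split; [exact: adj_unitary | rewrite adjK].
Qed.

Lemma Re_tr_Theta : complex.Re (\tr Th) = 1.
Proof.
rewrite (Re_tr_diagonalized Theta_diagonalized) -mxtens.mulr_sum.
by rewrite !sum_gweight // mulr1.
Qed.

Lemma Re_tr_Theta_ln_Theta : complex.Re (\tr (Th *m mln Th)) =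
  (- betaS * \sum_i q i * Ef i - ln Zl) + (- betaB * \sum_l qB l * hB l - ln ZB).
Proof.
have dTh := Theta_diagonalized.
rewrite (Re_tr_mul_diagonalized (diagonalizes_mfun _ dTh)).
under eq_bigr do rewrite (diagonal_entry dTh) mulrC.
have q0 i : 0 < q i by exact: gweight_gt0.
have qB0 l : 0 < qB l by exact: gweight_gt0.
by rewrite sum_tens_xlnx ?sum_gweight // !sum_gweight_ln.
Qed.

Lemma QtilE : Q = \sum_l qB l * hB l - complex.Re (\tr (Th *m tens 1%:M HB)).
Proof.
rewrite /Qtil (Re_tr_mul_diagonalized (gibbs_diagonalized betaB dB) HB).
rewrite (mxtrace_mulC (tens 1%:M HB)); congr (_ - _); apply: eq_bigr => l _.
by rewrite (diagonal_entry dB).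
Qed.

Lemma relent_Theta : relent Th (tens tS tB) = ln ZS - ln Zl - betaB * Q.
Proof.
apply: etrans (congr2 (fun x y => x - y) Re_tr_Theta_ln_Theta
  (Re_tr_mul_ln_gibbs_tens betaS betaB dS dB Re_tr_Theta)) _.
by rewrite QtilE Re_tr_Theta_HS; ring.
Qed.

Lemma avgP_expR_work :
  avgP HS0 betaS e (fun i => expR (- betaS * Wtil HSt HB U betaS betaB V e i))
  = Zl * expR (betaS * Q) / \sum_i expR (- betaS * e i).
Proof.
rewrite /avgP (partZ_diagonalized _ HS0_diagonalized) -mulrA mulr_suml.
apply: eq_bigr => i _; rewrite mulrAC -expRD [RHS]mulrA -expRD /Wtil /DeltaE.
by congr (expR _ / _); ring.
Qed.

Hypothesis hbS : 0 < betaS.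

Lemma fluctuation_equality :
  avgP HS0 betaS e (fun i => expR (- betaS * Wtil HSt HB U betaS betaB V e i))
  = expR (- betaS * DeltaF HS0 HSt betaS) * expR (- relent Th (tens tS tB))
    * expR (- (betaB - betaS) * Q).
Proof.
rewrite relent_Theta avgP_expR_work /DeltaF /freeF.
rewrite (partZ_diagonalized _ dS) (partZ_diagonalized _ HS0_diagonalized).
have Zl0 : 0 < Zl by apply: (sumr_gt0 (Ordinal hn)) => i; exact: expR_gt0.
have Z00 : 0 < \sum_i expR (- betaS * e i).
  by apply: (sumr_gt0 (Ordinal hn)) => i; exact: expR_gt0.
rewrite -{1}(lnK Zl0) -{1}(lnK Z00) -expRD -expRB -!expRD; congr expR.
by field; exact: lt0r_neq0.
Qed.

Lemma expR_avgP_le (f : 'I_n -> R) :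
  expR (- betaS * avgP HS0 betaS e f) <= avgP HS0 betaS e (fun i => expR (- betaS * f i)).
Proof.
rewrite /avgP (partZ_diagonalized _ HS0_diagonalized) mulr_sumr.
under eq_bigr do rewrite mulrCA.
apply: (jensen_expR (p := gweight betaS e)) (sum_gweight _ _ hn).
by move=> i; exact/ltW/gweight_gt0.
Qed.

End Setting.

Unset Implicit Arguments.

Theorem theorem1 (R : realType) (n m : nat) (hn : (0 < n)%N) (hm : (0 < m)%N)
  (HS0 HSt : 'M[R[i]]_n) (HB : 'M[R[i]]_m) (U : 'M[R[i]]_(n * m))
  (betaS betaB : R) (V : 'M[R[i]]_n) (e : 'I_n -> R) :
  HS0 \is hermsymmx -> HSt \is hermsymmx -> HB \is hermsymmx ->
  U \is unitarymx -> 0 < betaS -> 0 < betaB ->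
  V \is unitarymx -> (forall i, HS0 *m col i V = RC (e i) *: col i V) ->
  avgP HS0 betaS e (fun i => expR (- betaS * Wtil HSt HB U betaS betaB V e i))
    = expR (- betaS * DeltaF HS0 HSt betaS)
      * expR (- relent (Theta HSt HB U betaS betaB V) (tens (tauSt HSt betaS) (tauB HB betaB)))
      * expR (- (betaB - betaS) * Qtil HSt HB U betaS betaB V)
  /\
  avgP HS0 betaS e (Wtil HSt HB U betaS betaB V e)
    >= DeltaF HS0 HSt betaS
       + betaS^-1 * relent (rhoTil HSt HB U betaS betaB V) (tauSt HSt betaS)
       + (betaB - betaS) / betaS * Qtil HSt HB U betaS betaB V.
Proof.
move=> _ hSt hHB hU hbS _ hV hev.
have [P [hS dS]] := hermitian_diagonalizable hSt.
have [Pb [hB dB]] := hermitian_diagonalizable hHB.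
have equality := fluctuation_equality betaB hn hm hU hV hev dS dB hbS.
split; first exact: equality.
have jensen := expR_avgP_le betaS hn hV hev (Wtil HSt HB U betaS betaB V e).
rewrite equality in jensen.
apply: (ge_of_expR_bound hbS jensen).
apply: (relent_ptrB_le (Theta_diagonalized HSt betaS betaB hU hV dB)).
- by move=> a; rewrite mulr_ge0 // ltW // gweight_gt0.
- exact: gibbs_diagonalized dS.
- exact: gweight_gt0.
- exact: gibbs_diagonalized dB.
- exact: gweight_gt0.
- exact: sum_gweight.
Qed.
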